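(* Let $G$ be a discrete group, and let $I_0(G)^{\rm tw}$ denote the Banach $\ell^1(G)$-bimodule whose underlying space is $I_0(G)$, with left action induced by conjugation, $g\cdot a=e_g*a*e_{g^{-1}}$, and trivial right action $a\cdot g=a$ ($g\in G$). Then the maps $\Theta^n:C^n(\ell^1(G),I_0(G)')\to C^n(\ell^1(G),(I_0(G)^{\rm tw})')$ determined by $(\Theta^n\psi)(e_{g_1},\dots,e_{g_n})=(g_1\cdots g_n)^{-1}\cdot\psi(e_{g_1},\dots,e_{g_n})$ (the action on the right being the left action of $\ell^1(G)$ on the bimodule $I_0(G)'$) form a chain isomorphism of Banach cochain complexes, and hence $H^n(\ell^1(G),I_0(G)')\cong H^n(\ell^1(G),(I_0(G)^{\rm tw})')$ for all $n$. Moreover, with $S=G\setminus\{e\}$ regarded as a left $G$-set via conjugation, $I_0(G)^{\rm tw}\cong\ell^1(S)$ as $\ell^1(G)$-bimodules (with $\ell^1(S)$ carrying the left action induced by conjugation and trivial right action), so $H^n(\ell^1(G),I_0(G)')\cong H^n(\ell^1(G),\ell^1(S)')$ for all $n$.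
   Context: $\ell^1(G)$ is the convolution algebra of the discrete group $G$ with basis $(e_g)$; $I_0(G)$ is the kernel of the augmentation character $e_g\mapsto1$, a bimodule under multiplication. Bounded multilinear maps on $\ell^1(G)$ are determined by their values on basis elements. Hochschild cochains $C^n(A,M)$ are bounded $n$-linear maps $A^n\to M$ with the standard Hochschild coboundary; $M'$ has the adjoint bimodule structure. *)

From HB Require Import structures.
From mathcomp Require Import all_boot all_order all_algebra.

Set Implicit Arguments.
Unset Strict Implicit.
Unset Printing Implicit Defensive.

Import Order.TTheory GRing.Theory Num.Theory.
Local Open Scope ring_scope.

Section L1Cohomology.

Variables (R : numFieldType) (G : groupType).

(* Finitely supported vectors are dense in l^1(X), so
   bounded (multi)linear maps are determined by their values on them. *)
Definition fsupp_in (X : eqType) (a : X -> R) (s : seq X) : Prop :=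
  forall x, x \notin s -> a x = 0.

Definition finsupp (X : eqType) (a : X -> R) : Prop :=
  exists s : seq X, fsupp_in a s.

(* ||a||_1 <= K   (the sum over any duplicate-free list containing the
   support of a is the l^1 norm of a) *)
Definition normle (X : eqType) (a : X -> R) (K : R) : Prop :=
  exists s : seq X, [/\ uniq s, fsupp_in a s & \sum_(x <- s) `|a x| <= K].

(* A (closed) subspace E of l^1(X), given by its finitely supported
   elements [bm_mem], with the left and right actions of the basis
   elements e_g of l^1(G) (which determine the bounded actions of
   l^1(G)). *)
Record bimod := BiMod {
  bm_ix : eqType;
  bm_mem : (bm_ix -> R) -> Prop;
  bm_lact : G -> (bm_ix -> R) -> (bm_ix -> R);
  bm_ract : G -> (bm_ix -> R) -> (bm_ix -> R)
}.
Arguments bm_mem : clear implicits.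
Arguments bm_lact : clear implicits.
Arguments bm_ract : clear implicits.

(* I_0(G) = ker of the augmentation e_g |-> 1; actions by convolution:
   (e_g * a)(x) = a(g^-1 x),   (a * e_g)(x) = a(x g^-1). *)
Definition I0_mem (a : G -> R) : Prop :=
  finsupp a /\
  (forall s : seq G, uniq s -> fsupp_in a s -> \sum_(x <- s) a x = 0).

Definition I0 : bimod :=
  @BiMod G I0_mem
    (fun g a => fun x => a (g^-1 * x)%g)
    (fun g a => fun x => a (x * g^-1)%g).

Definition I0tw : bimod :=
  @BiMod G I0_mem
    (fun g a => fun x => a (g^-1 * x * g)%g)
    (fun g a => a).

Definition Sset : eqType := {g : G | g != 1%g}.

Definition conjS (g : G) (s : Sset) : Sset := insubd s (g * val s * g^-1)%g.

Definition l1S : bimod :=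
  @BiMod Sset (fun a => finsupp a)
    (fun g a => fun s => a (conjS g^-1 s))
    (fun g a => a).

(* An element of E' is a bounded linear functional on E, represented by
   its values on the (dense) finitely supported part of E. *)
Definition dual_elt (E : bimod) (phi : (bm_ix E -> R) -> R) : Prop :=
  [/\ (forall a b, bm_mem E a -> bm_mem E b ->
         phi (fun x => a x + b x) = phi a + phi b),
      (forall (c : R) a, bm_mem E a -> phi (fun x => c * a x) = c * phi a)
    & exists C : R, forall a K, bm_mem E a -> normle a K -> `|phi a| <= C * K].

(* A cochain psi : seq G -> E'; as an n-cochain only its values on
   sequences of length n matter: psi [:: g1; ..; gn] = psi(e_g1,..,e_gn).
   (Bounded n-linear maps l^1(G)^n -> E' correspond exactly to bounded
   families of such values.) *)
Definition cochain_t (E : bimod) := seq G -> (bm_ix E -> R) -> R.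

Definition cbound (E : bimod) (n : nat) (psi : cochain_t E) (K : R) : Prop :=
  forall gs, size gs = n ->
  forall a L, bm_mem E a -> normle a L -> `|psi gs a| <= K * L.

Definition cochain (E : bimod) (n : nat) (psi : cochain_t E) : Prop :=
  (forall gs, size gs = n -> dual_elt (psi gs)) /\ exists C : R, cbound n psi C.

Definition ceq (E : bimod) (n : nat) (psi chi : cochain_t E) : Prop :=
  forall gs, size gs = n -> forall a, bm_mem E a -> psi gs a = chi gs a.

Definition cadd (E : bimod) (psi chi : cochain_t E) : cochain_t E :=
  fun gs a => psi gs a + chi gs a.
Definition cscale (E : bimod) (c : R) (psi : cochain_t E) : cochain_t E :=
  fun gs a => c * psi gs a.
Definition czero (E : bimod) : cochain_t E := fun _ _ => 0.

(* [g1; ..; gi * g(i+1); ..] (0-indexed position i) *)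
Definition mergeAt (i : nat) (gs : seq G) : seq G :=
  take i gs ++ (nth 1%g gs i * nth 1%g gs i.+1)%g :: drop i.+2 gs.

(* Hochschild coboundary, with the adjoint actions on E':
   (e_g . phi)(a) = phi(a . e_g),  (phi . e_g)(a) = phi(e_g . a).
   (delta psi)(g1,..,g(n+1)) = g1 . psi(g2,..,g(n+1))
       + sum_{i=1}^n (-1)^i psi(.., gi g(i+1), ..)
       + (-1)^(n+1) psi(g1,..,gn) . g(n+1). *)
Definition cobound (E : bimod) (psi : cochain_t E) : cochain_t E :=
  fun gs a =>
    match gs with
    | [::] => 0
    | g1 :: rest =>
        psi rest (bm_ract E g1 a)
        + \sum_(i < size rest) (-1) ^+ i.+1 * psi (mergeAt i gs) a
        + (-1) ^+ (size rest).+1 * psi (take (size rest) gs) (bm_lact E (last g1 rest) a)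
    end.

Definition cocycle (E : bimod) (n : nat) (psi : cochain_t E) : Prop :=
  cochain n psi /\ ceq n.+1 (cobound psi) (@czero E).

Definition coboundary (E : bimod) (n : nat) (psi : cochain_t E) : Prop :=
  match n with
  | 0 => ceq 0 psi (@czero E)
  | m.+1 => exists chi, cochain m chi /\ ceq m.+1 psi (cobound chi)
  end.

(* H^n(l^1(G), E1') and H^n(l^1(G), E2') are isomorphic (as vector
   spaces): a linear map on cocycles, compatible with coboundaries,
   inducing a bijection Z^n/B^n -> Z^n/B^n. *)
Definition Hn_iso (E1 E2 : bimod) (n : nat) : Prop :=
  exists f : cochain_t E1 -> cochain_t E2,
  [/\ forall psi, cocycle n psi -> cocycle n (f psi),
      forall psi chi (c : R), cocycle n psi -> cocycle n chi ->
        ceq n (f (cadd psi (cscale c chi))) (cadd (f psi) (cscale c (f chi))),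
      forall psi, cocycle n psi -> (coboundary n (f psi) <-> coboundary n psi)
    & forall chi, cocycle n chi ->
        exists psi, cocycle n psi /\
          coboundary n (cadd (f psi) (cscale (-1) chi))].

Definition bimod_iso (E1 E2 : bimod) : Prop :=
  exists T : (bm_ix E1 -> R) -> (bm_ix E2 -> R),
  [/\
      (forall a, bm_mem E1 a -> bm_mem E2 (T a)) /\
      (forall a b (c : R), bm_mem E1 a -> bm_mem E1 b ->
        T (fun x => a x + c * b x) = (fun y => T a y + c * T b y)),
      (forall a b, bm_mem E1 a -> bm_mem E1 b -> T a = T b -> a = b) /\
      (forall b, bm_mem E2 b -> exists2 a, bm_mem E1 a & T a = b),
      (exists C : R, forall a K, bm_mem E1 a -> normle a K -> normle (T a) (C * K)) /\
      (exists C : R, forall a K, bm_mem E1 a -> normle (T a) K -> normle a (C * K))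
    & forall g a, bm_mem E1 a ->
        T (bm_lact E1 g a) = bm_lact E2 g (T a) /\
        T (bm_ract E1 g a) = bm_ract E2 g (T a)].

Definition gprod (gs : seq G) : G := foldr (fun g h => g * h)%g 1%g gs.

(* (Theta psi)(e_g1,..,e_gn) = (g1...gn)^-1 . psi(e_g1,..,e_gn), the
   action being the left action of l^1(G) on I_0(G)':
   (h . phi)(a) = phi(a * e_h). *)
Definition Theta (psi : cochain_t I0) : cochain_t I0tw :=
  fun gs a => psi gs (bm_ract I0 (gprod gs)^-1%g a).

End L1Cohomology.

From mathcomp Require Import all_boot all_order all_algebra zify.
From Stdlib Require Import FunctionalExtensionality ClassicalEpsilon.

Import Order.TTheory GRing.Theory Num.Theory.
Local Open Scope ring_scope.

(* Twisting an n-cochain by [(g1...gn)^-1] has the inverse twist by [g1...gn];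
   since the product of the arguments is unchanged when two adjacent ones are
   merged, the twist commutes with the Hochschild coboundary, so it is a chain
   isomorphism and induces isomorphisms in cohomology.  Restriction to [S]
   identifies [I_0(G)^tw] with [l^1(S)]: the value at [1] is recovered as minus
   the sum over [S], which costs at most a factor [2] in norm, and the conjugation
   actions correspond.  Precomposing with the inverse of this identification is a
   further chain isomorphism. *)

Section FiniteSupport.

Context {R : numFieldType} {X : eqType}.
Implicit Types (a b : X -> R) (s t : seq X).

Lemma fsupp_in_undup {a s} : fsupp_in a s -> fsupp_in a (undup s).
Proof. by move=> Ha x; rewrite mem_undup; apply: Ha. Qed.

Lemma fsupp_in_catl {a s} t : fsupp_in a s -> fsupp_in a (s ++ t).
Proof. by move=> Ha x; rewrite mem_cat negb_or => /andP[/Ha]. Qed.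

Lemma fsupp_in_catr {a} s {t} : fsupp_in a t -> fsupp_in a (s ++ t).
Proof. by move=> Ha x; rewrite mem_cat negb_or => /andP[_ /Ha]. Qed.

Lemma sum_fsupp_in_eq {a s t} : uniq s -> uniq t -> fsupp_in a s -> fsupp_in a t ->
  \sum_(x <- s) a x = \sum_(x <- t) a x.
Proof.
move=> Us Ut Has Hat.
have restrict u v : fsupp_in a v -> \sum_(x <- u) a x = \sum_(x <- u | x \in v) a x.
  move=> Hav; rewrite [RHS]big_mkcond; apply: eq_bigr => x _.
  by case: ifPn => // /Hav.
rewrite (restrict s t) // (restrict t s) // -[LHS]big_filter -[RHS]big_filter.
apply/perm_big/uniq_perm; rewrite ?filter_uniq // => x.
by rewrite !mem_filter andbC.
Qed.

Lemma fsupp_in_comp {a s} {f h : X -> X} :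
  cancel f h -> fsupp_in a s -> fsupp_in (fun x => a (f x)) (map h s).
Proof. by move=> fK Ha x Hx; apply: Ha; apply: contra Hx => Hfx; rewrite -[x]fK map_f. Qed.

Lemma finsupp_comp {a} {f : X -> X} : bijective f -> finsupp a -> finsupp (fun x => a (f x)).
Proof. by case=> h fK _ [s Ha]; exists (map h s); apply: fsupp_in_comp. Qed.

Lemma normle_comp {a K} {f : X -> X} : bijective f -> normle a K -> normle (fun x => a (f x)) K.
Proof.
case=> h fK hK [s [Us Ha Hsum]]; exists (map h s); split.
- by rewrite map_inj_uniq //; apply: can_inj hK.
- exact: fsupp_in_comp.
- by rewrite big_map; under eq_bigr do rewrite hK.
Qed.

(* The sum of [b] over any duplicate-free list containing its support, chosen
   classically; junk value [0] when [b] is not finitely supported. *)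
Definition fsum b : R :=
  match excluded_middle_informative (finsupp b) with
  | left Hb => \sum_(x <- undup (proj1_sig (constructive_indefinite_description _ Hb))) b x
  | right _ => 0
  end.

Lemma fsumE {b t} : uniq t -> fsupp_in b t -> fsum b = \sum_(x <- t) b x.
Proof.
move=> Ut Hbt; rewrite /fsum; case: excluded_middle_informative => [Hb|[]]; last by exists t.
case: constructive_indefinite_description => s Hbs /=.
by apply: sum_fsupp_in_eq => //; [exact: undup_uniq | exact: fsupp_in_undup].
Qed.

Lemma fsumD {b1 b2} : finsupp b1 -> finsupp b2 ->
  fsum (fun x => b1 x + b2 x) = fsum b1 + fsum b2.
Proof.
move=> [s1 H1] [s2 H2]; set u := undup (s1 ++ s2).
have H1u : fsupp_in b1 u by apply/fsupp_in_undup/fsupp_in_catl.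
have H2u : fsupp_in b2 u by apply/fsupp_in_undup/fsupp_in_catr.
have H12u : fsupp_in (fun x => b1 x + b2 x) u by move=> x Hx; rewrite H1u // H2u // addr0.
by rewrite (fsumE (undup_uniq _) H12u) (fsumE (undup_uniq _) H1u)
  (fsumE (undup_uniq _) H2u) big_split.
Qed.

Lemma fsumZ c {b} : finsupp b -> fsum (fun x => c * b x) = c * fsum b.
Proof.
move=> [s Hb]; have Hbu := fsupp_in_undup Hb.
have Hcbu : fsupp_in (fun x => c * b x) (undup s) by move=> x Hx; rewrite Hbu // mulr0.
by rewrite (fsumE (undup_uniq _) Hcbu) (fsumE (undup_uniq _) Hbu) mulr_sumr.
Qed.

End FiniteSupport.

Section GroupBijections.

Context {G : groupType}.
Implicit Types g : G.

Lemma rmul_bij g : bijective (fun x => x * g)%g.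
Proof. exact: Bijective (mulgK g) (mulgVK g). Qed.

Lemma conj_bij g : bijective (fun x => g^-1 * x * g)%g.
Proof.
by exists (fun x => g * x * g^-1)%g => x; rewrite !mulgA ?mulgK ?mulgVK ?mulgV ?mulVg mul1g.
Qed.

Lemma val_conjS g (s : Sset G) : val (conjS g s) = (g * val s * g^-1)%g.
Proof.
rewrite /conjS val_insubd; case: ifPn => // /negPn/eqP Hg1.
have : (g^-1 * (g * val s * g^-1) * g)%g = val s by rewrite !mulgA mulVg mul1g mulgVK.
by rewrite Hg1 mulg1 mulVg => Es; move: (valP s); rewrite -Es eqxx.
Qed.

Lemma conjSK g : cancel (conjS g) (conjS g^-1).
Proof. by move=> s; apply: val_inj; rewrite !val_conjS invgK !mulgA mulgVK mulVg mul1g. Qed.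

Lemma conjS_bij g : bijective (conjS g).
Proof.
by exists (conjS g^-1); [exact: conjSK | move=> s; have := conjSK g^-1 s; rewrite invgK].
Qed.

End GroupBijections.

Section Bimodules.

Context {R : numFieldType} {G : groupType}.

Definition actions_closed (E : bimod R G) : Prop :=
  forall g a, bm_mem a -> bm_mem (bm_lact (b:=E) g a) /\ bm_mem (bm_ract (b:=E) g a).

Lemma I0_mem_comp {a : G -> R} {f : G -> G} :
  bijective f -> I0_mem a -> I0_mem (fun x => a (f x)).
Proof.
case=> h fK hK [[s Has] Hsum]; have Hau := fsupp_in_undup Has.
have Uhu : uniq (map h (undup s)) by rewrite map_inj_uniq ?undup_uniq //; apply: can_inj hK.
have Hafu := fsupp_in_comp fK Hau.
split; first by exists (map h (undup s)).
move=> t Ut Haft; rewrite (sum_fsupp_in_eq Ut Uhu Haft Hafu) big_map.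
under eq_bigr do rewrite hK.
by apply: Hsum; rewrite ?undup_uniq.
Qed.

Lemma I0tw_actions_closed : actions_closed (I0tw R G).
Proof. by move=> g a Ha; split=> //; apply: I0_mem_comp Ha; apply: conj_bij. Qed.

Lemma l1S_actions_closed : actions_closed (l1S R G).
Proof. by move=> g a Ha; split=> //; apply: finsupp_comp Ha; apply: conjS_bij. Qed.

End Bimodules.

Lemma size_mergeAt {G : groupType} {i} {gs : seq G} :
  (i < (size gs).-1)%N -> size (mergeAt i gs) = (size gs).-1.
Proof. by move=> Hi; rewrite /mergeAt size_cat /= size_take size_drop; case: ifP; lia. Qed.

Section Cochains.

Context {R : numFieldType} {G : groupType} {E : bimod R G}.
Implicit Types (psi chi phi : cochain_t E) (n : nat).

Lemma ceq_sym {n psi chi} : ceq n psi chi -> ceq n chi psi.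
Proof. by move=> H gs Hs a Ha; rewrite H. Qed.

Lemma ceq_trans {n chi psi phi} : ceq n psi chi -> ceq n chi phi -> ceq n psi phi.
Proof. by move=> H1 H2 gs Hs a Ha; rewrite H1 // H2. Qed.

Lemma cobound_ceq {n psi chi} :
  actions_closed E -> ceq n psi chi -> ceq n.+1 (cobound psi) (cobound chi).
Proof.
move=> HE Heq [|g1 rest] //= [Hs] a Ha; congr (_ + _ + _).
- by apply: Heq => //; apply: (HE _ _ Ha).2.
- apply: eq_bigr => i _; congr (_ * _); apply: Heq => //.
  by rewrite size_mergeAt //= -Hs.
- congr (_ * _); apply: Heq; last exact: (HE _ _ Ha).1.
  by rewrite size_take /= ltnSn.
Qed.

Lemma cobound_czero gs a : cobound (@czero _ _ E) gs a = 0.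
Proof.
case: gs => [|g1 rest] //=; rewrite /czero big1 ?mulr0 ?addr0 // => i _.
by rewrite mulr0.
Qed.

Lemma cochain_czero n : cochain n (@czero _ _ E).
Proof.
split; last by exists 0 => gs _ a L _ _; rewrite normr0 mul0r.
move=> gs _; split=> [a b _ _|c a _|]; rewrite /czero ?addr0 ?mulr0 //.
by exists 0 => a K _ _; rewrite normr0 mul0r.
Qed.

Lemma coboundary_ceq {n psi chi} : ceq n psi chi -> coboundary n psi -> coboundary n chi.
Proof.
case: n psi chi => [|m] psi chi H; first exact: ceq_trans (ceq_sym H).
by case=> phi [Hphi Hpsi]; exists phi; split; last exact: ceq_trans (ceq_sym H) Hpsi.
Qed.

Lemma coboundary_czero n : coboundary n (@czero _ _ E).
Proof.
case: n => [|m] //; exists (@czero _ _ E); split; first exact: cochain_czero.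
by move=> gs _ a _; rewrite cobound_czero.
Qed.

End Cochains.

Section Precomposition.

Context {R : numFieldType} {G : groupType} {E1 E2 : bimod R G}.
Variables (L : seq G -> (bm_ix E2 -> R) -> bm_ix E1 -> R) (C : R).
Hypothesis L_mem : forall gs a, bm_mem a -> bm_mem (L gs a).
Hypothesis L_add : forall gs a b, bm_mem a -> bm_mem b ->
  L gs (fun x => a x + b x) = (fun x => L gs a x + L gs b x).
Hypothesis L_scale : forall gs c a, bm_mem a -> L gs (fun x => c * a x) = (fun x => c * L gs a x).
Hypothesis L_bounded : forall gs a K, bm_mem a -> normle a K -> normle (L gs a) (C * K).

Lemma cbound_pre n (psi : cochain_t E1) K :
  cbound n psi K -> cbound n (fun gs a => psi gs (L gs a)) (K * C).
Proof.
move=> Hpsi gs Hs a K' Ha HaK; rewrite -mulrA.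
by apply: Hpsi => //; [apply: L_mem | apply: L_bounded].
Qed.

Lemma cochain_pre n (psi : cochain_t E1) :
  cochain n psi -> cochain n (fun gs a => psi gs (L gs a)).
Proof.
move=> [Hdual [K HK]]; split; last by exists (K * C); apply: cbound_pre.
move=> gs Hs; have [Hadd Hscale [D HD]] := Hdual gs Hs; split.
- by move=> a b Ha Hb; rewrite L_add //; apply: Hadd; apply: L_mem.
- by move=> c a Ha; rewrite L_scale //; apply: Hscale; apply: L_mem.
- by exists (D * C) => a K' Ha HaK; rewrite -mulrA; apply: HD; [apply: L_mem | apply: L_bounded].
Qed.

End Precomposition.

Section CochainIso.

Context {R : numFieldType} {G : groupType} {E1 E2 : bimod R G}.

Record cochain_iso (F : cochain_t E1 -> cochain_t E2) (Fi : cochain_t E2 -> cochain_t E1) : Prop :=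
  CochainIso {
    cochain_isoP : forall n psi, cochain n psi -> cochain n (F psi);
    cochain_isoVP : forall n chi, cochain n chi -> cochain n (Fi chi);
    cochain_iso_ceq : forall n psi chi, ceq n psi chi -> ceq n (F psi) (F chi);
    cochain_iso_ceqV : forall n psi chi, ceq n psi chi -> ceq n (Fi psi) (Fi chi);
    cochain_iso_linear : forall n psi chi c,
      ceq n (F (cadd psi (cscale c chi))) (cadd (F psi) (cscale c (F chi)));
    cochain_iso_cobound : forall n psi, ceq n.+1 (cobound (F psi)) (F (cobound psi));
    cochain_isoK : forall n psi, ceq n (Fi (F psi)) psi;
    cochain_isoVK : forall n chi, ceq n (F (Fi chi)) chi
  }.

End CochainIso.

Arguments cochain_isoP {R G E1 E2 F Fi} _ n psi.
Arguments cochain_isoVP {R G E1 E2 F Fi} _ n chi.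
Arguments cochain_iso_ceq {R G E1 E2 F Fi} _ {n psi chi}.
Arguments cochain_iso_ceqV {R G E1 E2 F Fi} _ {n psi chi}.
Arguments cochain_iso_linear {R G E1 E2 F Fi} _ n psi chi c.
Arguments cochain_iso_cobound {R G E1 E2 F Fi} _ n psi.
Arguments cochain_isoK {R G E1 E2 F Fi} _ n psi.
Arguments cochain_isoVK {R G E1 E2 F Fi} _ n chi.

Section CochainIsoTheory.

Context {R : numFieldType} {G : groupType} {E1 E2 : bimod R G}.
Context {F : cochain_t E1 -> cochain_t E2} {Fi : cochain_t E2 -> cochain_t E1}.
Hypothesis FFi : cochain_iso F Fi.

Lemma cochain_iso_czero n : ceq n (F (@czero _ _ E1)) (@czero _ _ E2).
Proof.
apply: (ceq_trans (chi := F (cadd (@czero _ _ E1) (cscale (-1) (@czero _ _ E1))))).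
  by refine (cochain_iso_ceq FFi _) => gs _ a _; rewrite /cadd /cscale /czero mulr0 addr0.
refine (ceq_trans (cochain_iso_linear FFi _ _ _ _) _) => gs _ a _.
by rewrite /cadd /cscale mulN1r subrr.
Qed.

Lemma cochain_iso_inj {n psi chi} : ceq n (F psi) (F chi) -> ceq n psi chi.
Proof.
move=> H; apply: (ceq_trans (ceq_sym (cochain_isoK FFi n psi))).
exact: ceq_trans (cochain_iso_ceqV FFi H) (cochain_isoK FFi n chi).
Qed.

Lemma cocycle_iso {n psi} : cocycle n psi -> cocycle n (F psi).
Proof.
move=> [Hpsi Hcob]; split; first exact: cochain_isoP FFi _ _ Hpsi.
exact: ceq_trans (cochain_iso_cobound FFi _ _)
  (ceq_trans (cochain_iso_ceq FFi Hcob) (cochain_iso_czero _)).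
Qed.

Lemma coboundary_iso {n psi} : coboundary n psi -> coboundary n (F psi).
Proof.
case: n psi => [|m] psi.
  by move=> H; apply: ceq_trans (cochain_iso_ceq FFi H) (cochain_iso_czero _).
case=> chi [Hchi Hpsi]; exists (F chi); split; first exact: cochain_isoP FFi _ _ Hchi.
exact: ceq_trans (cochain_iso_ceq FFi Hpsi) (ceq_sym (cochain_iso_cobound FFi _ _)).
Qed.

(* [cobound] has to respect [ceq] on [E2] for [Fi] to inherit the chain-map property. *)
Lemma cochain_iso_sym : actions_closed E2 -> cochain_iso Fi F.
Proof.
move=> E2_closed; split; try by case: FFi.
- move=> n psi chi c; apply: cochain_iso_inj.
  refine (ceq_trans (cochain_isoVK FFi _ _) _); apply: ceq_sym.
  refine (ceq_trans (cochain_iso_linear FFi _ _ _ _) _) => gs Hs a Ha.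
  by rewrite /cadd /cscale !(cochain_isoVK FFi n _ gs Hs a Ha).
- move=> n chi; apply: cochain_iso_inj.
  refine (ceq_trans (ceq_sym (cochain_iso_cobound FFi _ _)) _).
  refine (ceq_trans (cobound_ceq E2_closed (cochain_isoVK FFi _ _)) _).
  exact: ceq_sym (cochain_isoVK FFi _ _).
Qed.

End CochainIsoTheory.

Section CochainIsoComp.

Context {R : numFieldType} {G : groupType} {E1 E2 E3 : bimod R G}.
Context {F1 : cochain_t E1 -> cochain_t E2} {Fi1 : cochain_t E2 -> cochain_t E1}.
Context {F2 : cochain_t E2 -> cochain_t E3} {Fi2 : cochain_t E3 -> cochain_t E2}.

Lemma cochain_iso_comp : cochain_iso F1 Fi1 -> cochain_iso F2 Fi2 ->
  cochain_iso (fun psi => F2 (F1 psi)) (fun chi => Fi1 (Fi2 chi)).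
Proof.
move=> I1 I2; split.
- move=> n psi H; exact: cochain_isoP I2 _ _ (cochain_isoP I1 _ _ H).
- move=> n chi H; exact: cochain_isoVP I1 _ _ (cochain_isoVP I2 _ _ H).
- move=> n psi chi H; exact: (cochain_iso_ceq I2 (cochain_iso_ceq I1 H)).
- move=> n psi chi H; exact: (cochain_iso_ceqV I1 (cochain_iso_ceqV I2 H)).
- move=> n psi chi c.
  exact: ceq_trans (cochain_iso_ceq I2 (cochain_iso_linear I1 _ _ _ _))
    (cochain_iso_linear I2 _ _ _ _).
- move=> n psi.
  exact: ceq_trans (cochain_iso_cobound I2 _ _) (cochain_iso_ceq I2 (cochain_iso_cobound I1 _ _)).
- move=> n psi.
  exact: ceq_trans (cochain_iso_ceqV I1 (cochain_isoK I2 _ _)) (cochain_isoK I1 _ _).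
- move=> n chi.
  exact: ceq_trans (cochain_iso_ceq I2 (cochain_isoVK I1 _ _)) (cochain_isoVK I2 _ _).
Qed.

End CochainIsoComp.

Lemma Hn_iso_of_cochain_iso {R : numFieldType} {G : groupType} {E1 E2 : bimod R G}
    {F : cochain_t E1 -> cochain_t E2} {Fi : cochain_t E2 -> cochain_t E1} n :
  actions_closed E2 -> cochain_iso F Fi -> Hn_iso E1 E2 n.
Proof.
move=> E2_closed FFi; have FiF := cochain_iso_sym FFi E2_closed.
exists F; split.
- by move=> psi; apply: (cocycle_iso FFi).
- by move=> psi chi c _ _; apply: (cochain_iso_linear FFi).
- move=> psi _; split; last exact: (coboundary_iso FFi).
  by move/(coboundary_iso FiF); apply: coboundary_ceq; apply: (cochain_isoK FFi).
- move=> chi Hchi; exists (Fi chi); split; first exact: (cocycle_iso FiF Hchi).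
  apply: coboundary_ceq (coboundary_czero _) => gs Hs a Ha.
  by rewrite /cadd /cscale /czero (cochain_isoVK FFi n chi gs Hs a Ha) mulN1r subrr.
Qed.

Section Theta.

Context {R : numFieldType} {G : groupType}.

Lemma gprod_mergeAt {i} {gs : seq G} : (i < (size gs).-1)%N -> gprod (mergeAt i gs) = gprod gs.
Proof.
elim: gs i => [|g gs IH] [|i] //= Hi.
- by case: gs IH Hi => [|h t] //= _ _; rewrite /mergeAt /= drop0 mulgA.
- by rewrite -/(gprod (g :: mergeAt i gs)) /= IH //; lia.
Qed.

Lemma gprod_take_last (g1 : G) rest :
  (gprod (take (size rest) (g1 :: rest)) * last g1 rest)%g = gprod (g1 :: rest).
Proof.
elim: rest g1 => [|h t IH] g1; first by rewrite /= mul1g mulg1.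
have -> : take (size (h :: t)) (g1 :: h :: t) = g1 :: take (size t) (h :: t) by [].
by rewrite /= -mulgA IH.
Qed.

Definition Theta_inv (chi : cochain_t (I0tw R G)) : cochain_t (I0 R G) :=
  fun gs a => chi gs (fun x => a (x * (gprod gs)^-1)%g).

Lemma ThetaK : cancel (@Theta R G) Theta_inv.
Proof.
move=> psi; apply: functional_extensionality => gs; apply: functional_extensionality => a.
by congr (psi gs); apply: functional_extensionality => x; rewrite /= invgK mulgK.
Qed.

Lemma Theta_invK : cancel Theta_inv (@Theta R G).
Proof.
move=> chi; apply: functional_extensionality => gs; apply: functional_extensionality => a.
by congr (chi gs); apply: functional_extensionality => x; rewrite /= invgK mulgVK.
Qed.

(* As [gprod] is multiplicative, the twist absorbs the right action of [g1] and
   turns left translation by the last argument into conjugation. *)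
Lemma cobound_Theta (psi : cochain_t (I0 R G)) gs a :
  cobound (Theta psi) gs a = Theta (cobound psi) gs a.
Proof.
case: gs => [|g1 rest] //; rewrite /cobound /Theta /=; congr (_ + _ + _).
- by congr (psi rest); apply: functional_extensionality => x /=; rewrite !invgK mulgA mulgVK.
- by apply: eq_bigr => i _; rewrite gprod_mergeAt.
- congr (_ * psi _ _); apply: functional_extensionality => x /=.
  by have /= <- := gprod_take_last g1 rest; rewrite !invgK !mulgA.
Qed.

Definition rtrans (h : seq G -> G) (gs : seq G) (a : G -> R) : G -> R :=
  fun x => a (x * h gs)%g.

Lemma rtrans_mem h gs a : I0_mem a -> I0_mem (rtrans h gs a).
Proof. exact: I0_mem_comp (rmul_bij _). Qed.

Lemma rtrans_bounded h gs a K : I0_mem a -> normle a K -> normle (rtrans h gs a) (1 * K).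
Proof. by move=> _; rewrite mul1r; apply: normle_comp (rmul_bij _). Qed.

Lemma cochain_Theta n psi : cochain n psi -> cochain n (@Theta R G psi).
Proof.
exact: (cochain_pre (E1 := I0 R G) (E2 := I0tw R G) (rtrans (fun gs => (gprod gs)^-1^-1)%g) 1
  (rtrans_mem _) (fun _ _ _ _ _ => erefl) (fun _ _ _ _ => erefl) (rtrans_bounded _)).
Qed.

Lemma cochain_Theta_inv n chi : cochain n chi -> cochain n (Theta_inv chi).
Proof.
exact: (cochain_pre (E1 := I0tw R G) (E2 := I0 R G) (rtrans (fun gs => (gprod gs)^-1)%g) 1
  (rtrans_mem _) (fun _ _ _ _ _ => erefl) (fun _ _ _ _ => erefl) (rtrans_bounded _)).
Qed.

Lemma cbound_Theta n psi K : cbound n psi K <-> cbound n (@Theta R G psi) K.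
Proof.
split=> H.
- have := cbound_pre (E1 := I0 R G) (E2 := I0tw R G) (rtrans (fun gs => (gprod gs)^-1^-1)%g) 1
    (rtrans_mem _) (rtrans_bounded _) n psi K H.
  by rewrite mulr1.
- have := cbound_pre (E1 := I0tw R G) (E2 := I0 R G) (rtrans (fun gs => (gprod gs)^-1)%g) 1
    (rtrans_mem _) (rtrans_bounded _) n (Theta psi) K H.
  by rewrite mulr1 -/(Theta_inv (Theta psi)) ThetaK.
Qed.

Lemma cochain_iso_Theta : cochain_iso (@Theta R G) Theta_inv.
Proof.
split.
- exact: cochain_Theta.
- exact: cochain_Theta_inv.
- by move=> n psi chi H gs Hs a Ha; apply: H => //; apply: I0_mem_comp (rmul_bij _) Ha.
- by move=> n psi chi H gs Hs a Ha; apply: H => //; apply: I0_mem_comp (rmul_bij _) Ha.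
- by [].
- by move=> n psi gs _ a _; apply: cobound_Theta.
- by move=> n psi; rewrite ThetaK.
- by move=> n chi; rewrite Theta_invK.
Qed.

End Theta.

Section TwistedAsL1S.

Context {R : numFieldType} {G : groupType}.
Implicit Types (a : G -> R) (b : Sset G -> R) (t : seq (Sset G)).

Definition restrictS a : Sset G -> R := fun s => a (val s).

(* The value at [1] is forced by the augmentation. *)
Definition extendS b : G -> R :=
  fun x => if insub x is Some s then b s else - fsum b.

Lemma extendS_val b s : extendS b (val s) = b s.
Proof. by rewrite /extendS valK. Qed.

Lemma extendS_1 b : extendS b 1%g = - fsum b.
Proof. by rewrite /extendS insubF //= eqxx. Qed.

Lemma extendSK : cancel extendS restrictS.
Proof. by move=> b; apply: functional_extensionality => s; rewrite /restrictS extendS_val. Qed.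

Lemma uniq_cons1_val {t} : uniq t -> uniq (1%g :: map val t).
Proof.
move=> Ut; rewrite /= map_inj_uniq ?Ut ?andbT; last exact: val_inj.
by apply/mapP => -[[x x_neq1] _ /= E]; rewrite -E eqxx in x_neq1.
Qed.

Lemma fsupp_in_cons1_val {a t} :
  fsupp_in (restrictS a) t -> fsupp_in a (1%g :: map val t).
Proof.
move=> Ha x; rewrite inE negb_or => /andP[x_neq1 x_notin].
apply: (Ha (exist _ x x_neq1)); apply: contra x_notin => Hx.
by rewrite -[x]/(val (exist _ x x_neq1 : Sset G)) map_f.
Qed.

Lemma fsupp_in_restrictS {a s} : fsupp_in a s -> fsupp_in (restrictS a) (pmap insub s).
Proof. by move=> Ha y; rewrite mem_pmap_sub; apply: Ha. Qed.

Lemma finsupp_restrictS {a} : I0_mem a -> finsupp (restrictS a).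
Proof. by move=> [[s Ha] _]; exists (pmap insub s); apply: fsupp_in_restrictS. Qed.

Lemma I0_mem_at1 {a} : I0_mem a -> a 1%g = - fsum (restrictS a).
Proof.
move=> [[s Ha] Hsum]; pose t : seq (Sset G) := pmap insub (undup s).
have Ut : uniq t by apply: pmap_sub_uniq; apply: undup_uniq.
have Hat : fsupp_in (restrictS a) t by apply/fsupp_in_restrictS/fsupp_in_undup.
have := Hsum _ (uniq_cons1_val Ut) (fsupp_in_cons1_val Hat).
by rewrite big_cons big_map (fsumE Ut Hat) => /eqP; rewrite addr_eq0 => /eqP.
Qed.

Lemma restrictSK {a} : I0_mem a -> extendS (restrictS a) = a.
Proof.
move=> Ha; apply: functional_extensionality => x; rewrite /extendS.
by case: insubP => [s _ <-| /negPn/eqP ->] //; rewrite (I0_mem_at1 Ha).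
Qed.

Lemma I0_mem_extendS {b} : finsupp b -> I0_mem (extendS b).
Proof.
move=> [t Hb]; set u := undup t; have Uu : uniq u := undup_uniq t.
have Hbu : fsupp_in b u := fsupp_in_undup Hb.
have Hext : fsupp_in (extendS b) (1%g :: map val u) by apply: fsupp_in_cons1_val; rewrite extendSK.
split; first by exists (1%g :: map val u).
move=> v Uv Hv; rewrite (sum_fsupp_in_eq Uv (uniq_cons1_val Uu) Hv Hext).
rewrite big_cons big_map extendS_1 (fsumE Uu Hbu).
by under eq_bigr do rewrite extendS_val; rewrite addNr.
Qed.

Lemma normle_restrictS {a K} : normle a K -> normle (restrictS a) K.
Proof.
move=> [s [Us Ha Hsum]]; exists (pmap insub s); split.
- exact: pmap_sub_uniq.
- exact: fsupp_in_restrictS.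
- apply: le_trans Hsum; rewrite /restrictS -(big_map val xpredT (fun x => `|a x|)).
  rewrite (pmap_filter (@insubK _ _ (Sset G))) big_filter big_mkcond /=.
  by apply: ler_sum => x _; case: (insub x) => //= _; rewrite normr_ge0.
Qed.

(* [|a 1| = |sum_{s in S} a s| <= ||restrictS a||], whence the factor [2]. *)
Lemma normle_extendS {a K} : I0_mem a -> normle (restrictS a) K -> normle a ((1 + 1) * K).
Proof.
move=> Ha [t [Ut Hat Hsum]]; exists (1%g :: map val t); split.
- exact: uniq_cons1_val.
- exact: fsupp_in_cons1_val.
rewrite big_cons big_map (I0_mem_at1 Ha) (fsumE Ut Hat) normrN mulrDl mul1r.
by apply: lerD => //; apply: le_trans Hsum; apply: ler_norm_sum.
Qed.

Lemma restrictS_lact g a :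
  restrictS (bm_lact (b:=I0tw R G) g a) = bm_lact (b:=l1S R G) g (restrictS a).
Proof. by apply: functional_extensionality => s; rewrite /restrictS /= val_conjS invgK. Qed.

Lemma extendS_lact g {b} : finsupp b ->
  extendS (bm_lact (b:=l1S R G) g b) = bm_lact (b:=I0tw R G) g (extendS b).
Proof.
move=> Hb; have Hext := I0_mem_extendS Hb.
rewrite -[in RHS](restrictSK (I0tw_actions_closed g _ Hext).1) restrictS_lact.
by rewrite extendSK.
Qed.

Lemma extendS_add {b1 b2} : finsupp b1 -> finsupp b2 ->
  extendS (fun s => b1 s + b2 s) = (fun x => extendS b1 x + extendS b2 x).
Proof.
move=> H1 H2; apply: functional_extensionality => x; rewrite /extendS.
by case: (insub x) => [s|] //; rewrite fsumD // opprD.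
Qed.

Lemma extendS_scale c {b} : finsupp b ->
  extendS (fun s => c * b s) = (fun x => c * extendS b x).
Proof.
move=> Hb; apply: functional_extensionality => x; rewrite /extendS.
by case: (insub x) => [s|] //; rewrite fsumZ // mulrN.
Qed.

Lemma bimod_iso_I0tw_l1S : bimod_iso (I0tw R G) (l1S R G).
Proof.
exists restrictS; split.
- by split=> [a|//]; apply: finsupp_restrictS.
- split=> [a1 a2 Ha1 Ha2 Ea|b Hb].
    by rewrite -(restrictSK Ha1) -(restrictSK Ha2) Ea.
  by exists (extendS b); [apply: I0_mem_extendS | apply: extendSK].
- split; first by exists 1 => a K _ Ha; rewrite mul1r; apply: normle_restrictS.
  by exists (1 + 1) => a K Ha; apply: normle_extendS.
- by move=> g a _; split; first exact: restrictS_lact.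
Qed.

Definition cochain_to_l1S (chi : cochain_t (I0tw R G)) : cochain_t (l1S R G) :=
  fun gs b => chi gs (extendS b).

Definition cochain_of_l1S (phi : cochain_t (l1S R G)) : cochain_t (I0tw R G) :=
  fun gs a => phi gs (restrictS a).

Lemma cochain_iso_l1S : cochain_iso cochain_to_l1S cochain_of_l1S.
Proof.
split.
- move=> n chi; apply: (cochain_pre (E1 := I0tw R G) (E2 := l1S R G) (fun _ => extendS) (1 + 1)).
  + by move=> _ b; apply: I0_mem_extendS.
  + by move=> _ b1 b2; apply: extendS_add.
  + by move=> _ c b; apply: extendS_scale.
  + move=> _ b K Hb HbK; apply: normle_extendS; first exact: I0_mem_extendS.
    by rewrite extendSK.
- move=> n phi; apply: (cochain_pre (E1 := l1S R G) (E2 := I0tw R G) (fun _ => restrictS) 1) => //.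
  + by move=> _ a; apply: finsupp_restrictS.
  + by move=> _ a K _ HaK; rewrite mul1r; apply: normle_restrictS.
- by move=> n psi chi H gs Hs b Hb; apply: H => //; apply: I0_mem_extendS.
- by move=> n psi chi H gs Hs a Ha; apply: H => //; apply: finsupp_restrictS.
- by [].
- move=> n chi [|g1 rest] // _ b Hb.
  by rewrite /cochain_to_l1S /cobound (extendS_lact _ Hb).
- by move=> n chi gs _ a Ha; rewrite /cochain_to_l1S /cochain_of_l1S restrictSK.
- by move=> n phi gs _ b _; rewrite /cochain_to_l1S /cochain_of_l1S extendSK.
Qed.

End TwistedAsL1S.

Theorem mainTheorem4 (R : numFieldType) (G : groupType) :
  (* Theta is a chain isomorphism of Banach cochain complexes *)
  [/\ (forall n : nat,
         [/\ forall psi : cochain_t (I0 R G), cochain n psi -> cochain n (Theta psi),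
             forall (psi chi : cochain_t (I0 R G)) (c : R),
               Theta (cadd psi (cscale c chi))
               = cadd (Theta psi) (cscale c (Theta chi)),
             forall psi chi : cochain_t (I0 R G), cochain n psi -> cochain n chi ->
               ceq n (Theta psi) (Theta chi) -> ceq n psi chi,
             forall chi, @cochain R G (I0tw R G) n chi ->
               exists psi : cochain_t (I0 R G), cochain n psi /\ ceq n (Theta psi) chi
           & exists C : R, forall (psi : cochain_t (I0 R G)) (K : R), cochain n psi ->
               (cbound n psi K -> cbound n (Theta psi) (C * K)) /\
               (cbound n (Theta psi) K -> cbound n psi (C * K))]),
      (forall (n : nat) (psi : cochain_t (I0 R G)), cochain n psi ->
         ceq n.+1 (cobound (Theta psi)) (Theta (cobound psi))),
      (* hence H^n(l^1 G, I_0(G)') ~= H^n(l^1 G, (I_0(G)^tw)') *)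
      (forall n : nat, Hn_iso (I0 R G) (I0tw R G) n),
      (* I_0(G)^tw ~= l^1(S) as l^1(G)-bimodules *)
      bimod_iso (I0tw R G) (l1S R G)
    & (* hence H^n(l^1 G, I_0(G)') ~= H^n(l^1 G, l^1(S)') *)
      (forall n : nat, Hn_iso (I0 R G) (l1S R G) n)].
Proof.
have ThetaI := @cochain_iso_Theta R G.
split.
- move=> n; split.
  + exact: cochain_Theta.
  + by [].
  + by move=> psi chi _ _; apply: (cochain_iso_inj ThetaI).
  + move=> chi Hchi; exists (Theta_inv chi).
    by rewrite Theta_invK; split; first exact: cochain_Theta_inv.
  + by exists 1 => psi K _; rewrite mul1r -cbound_Theta.
- by move=> n psi _; apply: (cochain_iso_cobound ThetaI).
- move=> n; exact: Hn_iso_of_cochain_iso I0tw_actions_closed ThetaI.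
- exact: bimod_iso_I0tw_l1S.
- move=> n; apply: Hn_iso_of_cochain_iso l1S_actions_closed _.
  exact: cochain_iso_comp ThetaI cochain_iso_l1S.
Qed.
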